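(* Let $\theta:\mathbb{A}\to\mathbb{A}^\lambda$ be a primitive substitution satisfying the standing assumptions, with height $h=h(\theta)$ and pure base $\theta^{(h)}$. Then $c(\theta)=h(\theta)\cdot c(\theta^{(h)})$. In particular $h(\theta)\mid c(\theta)$.
   Context: Substitution $\theta:\mathbb{A}\to\mathbb{A}^\lambda$ of constant length $\lambda\ge2$, extended by concatenation; primitive: some iterate $\theta^k(a)$ contains all letters for each $a$. Standing assumptions: $\theta(a_0)_0=a_0$ for some $a_0$, $\theta$ injective on letters, subshift infinite; $u$ the fixed point with $u[0]=a_0$. Height $h(\theta)=\max\{m\ge1:\gcd(m,\lambda)=1,\ m\mid\gcd\{r\ge1:u[r]=u[0]\}\}$; column number $c(\theta)=\min_{k\ge1,0\le j<\lambda^k}|\{\theta^k(a)_j:a\in\mathbb{A}\}|$ (for any primitive substitution these are defined analogously, using a fixed point of a suitable power). Pure base: let $\mathbb{A}^{(h)}=\{u[mh,mh+h-1]:m\ge0\}\subset\mathbb{A}^h$ and define $\theta^{(h)}:\mathbb{A}^{(h)}\to(\mathbb{A}^{(h)})^\lambda$ by $\theta^{(h)}(w)_j=\theta(w)[jh,(j+1)h-1]$ for $0\le j<\lambda$ (here $\theta(w)$ is the concatenation $\theta(w_0)\cdots\theta(w_{h-1})$ of length $\lambda h$); $\theta^{(h)}$ is a primitive substitution of length $\lambda$. *)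

From HB Require Import structures.
From mathcomp Require Import all_boot all_order all_algebra.
From Stdlib Require Import ClassicalEpsilon.
Set Implicit Arguments. Unset Strict Implicit. Unset Printing Implicit Defensive.

Definition pb (P : Prop) : bool :=
  if excluded_middle_informative P then true else false.

Section Subst.
Variables (T : Type) (lam : nat) (s : T -> lam.-tuple T).

(* iter_sub k a j = theta^k(a)_j  (meaningful for j < lam^k);
   theta^{k+1}(a) = theta(theta^k(a)) by concatenation. *)
Fixpoint iter_sub (k : nat) (a : T) (j : nat) : T :=
  match k with
  | 0 => a
  | k'.+1 => let b := iter_sub k' a (j %/ lam) in nth b (s b) (j %% lam)
  end.
End Subst.

Definition primitive (A : finType) lam (theta : A -> lam.-tuple A) : Prop :=
  exists k, 0 < k /\ forall a b : A, exists j, j < lam ^ k /\ iter_sub theta k a j = b.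

(* The fixed point u with u[0] = a0 (assuming theta(a0)_0 = a0, lam >= 2):
   u[n] = theta^{n+1}(a0)_n. *)
Definition fixpt (A : Type) lam (theta : A -> lam.-tuple A) (a0 : A) (n : nat) : A :=
  iter_sub theta n.+1 a0 n.

Definition in_subshift (A : Type) lam (theta : A -> lam.-tuple A) (a0 : A)
  (x : int -> A) : Prop :=
  forall (i : int) (n : nat), exists m : nat,
    forall t, t < n -> x (i + Posz t)%R = fixpt theta a0 (m + t).

Definition infinite_subshift (A : Type) lam (theta : A -> lam.-tuple A) (a0 : A) : Prop :=
  ~ exists (n : nat) (f : 'I_n -> int -> A),
      forall x, in_subshift theta a0 x -> exists i, x = f i.

Definition return_time (A : Type) lam (theta : A -> lam.-tuple A) (a0 : A) (r : nat) : Prop :=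
  0 < r /\ fixpt theta a0 r = fixpt theta a0 0.

Definition is_return_gcd (A : Type) lam (theta : A -> lam.-tuple A) (a0 : A) (g : nat) : Prop :=
  (forall r, return_time theta a0 r -> g %| r) /\
  (forall d, (forall r, return_time theta a0 r -> d %| r) -> d %| g).

Definition is_height (A : Type) lam (theta : A -> lam.-tuple A) (a0 : A) (h : nat) : Prop :=
  exists g, is_return_gcd theta a0 g /\
    [/\ 0 < h, coprime h lam, h %| g &
        forall m, 0 < m -> coprime m lam -> m %| g -> m <= h].

Definition is_colnum (T : finType) lam (s : T -> lam.-tuple T) (B : {set T}) (c : nat) : Prop :=
  (exists k j, [/\ 0 < k, j < lam ^ k & #|[set iter_sub s k a j | a in B]| = c]) /\
  (forall k j, 0 < k -> j < lam ^ k -> c <= #|[set iter_sub s k a j | a in B]|).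

Definition ublock (A : Type) lam (theta : A -> lam.-tuple A) (a0 : A) (h m : nat) : h.-tuple A :=
  [tuple fixpt theta a0 (m * h + t) | t < h].

Definition pure_alphabet (A : finType) lam (theta : A -> lam.-tuple A) (a0 : A) (h : nat)
  : {set h.-tuple A} :=
  [set w | pb (exists m, w = ublock theta a0 h m)].

(* theta^(h)(w)_j = theta(w)[jh, (j+1)h - 1], where theta(w) = theta(w_0)...theta(w_{h-1}). *)
Definition pure_base (A : Type) lam (theta : A -> lam.-tuple A) (a0 : A) (h : nat)
  (w : h.-tuple A) : lam.-tuple (h.-tuple A) :=
  [tuple [tuple (let i := (j : nat) * h + t in
                 nth a0 (theta (nth a0 w (i %/ lam))) (i %% lam)) | t < h] | j < lam].
Arguments pure_base {A lam} theta a0 h w.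
Arguments pure_alphabet {A lam} theta a0 h.
Arguments ublock {A lam} theta a0 h m.

From HB Require Import structures.
From mathcomp Require Import all_boot all_order all_algebra.
From mathcomp Require Import zify ring.
From Stdlib Require Import ClassicalEpsilon.
Set Implicit Arguments. Unset Strict Implicit. Unset Printing Implicit Defensive.

(* Primitivity sends every letter back to [a0] after a fixed number of steps, and
   the positions of [a0] in [u] are multiples of [h], which is coprime to [lam];
   so the position [n] of a letter in [u] is determined modulo [h] by the letter.
   The letters of a column of [theta] therefore split into [h] residue classes.
   Each class of a minimal column has at most [c(theta^(h))] letters, because
   refining a minimal column does not change it and the class is then the image
   of a minimal column of the pure base; and each class has at least as many
   letters as some column of the pure base, whose blocks are read off an iterate
   of [theta] applied to the letters of the class. *)

Lemma pbP (P : Prop) : reflect P (pb P).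
Proof. by rewrite /pb; case: excluded_middle_informative => p; constructor. Qed.

Section IterSub.
Variables (T : Type) (lam : nat) (s : T -> lam.-tuple T).
Hypothesis lam_gt0 : 0 < lam.

Lemma iter_subD k l a j :
  iter_sub s (k + l) a j = iter_sub s l (iter_sub s k a (j %/ lam ^ l)) (j %% lam ^ l).
Proof.
elim: l j => [|l IHl] j; first by rewrite addn0 expn0 divn1 modn1.
rewrite addnS /= IHl expnS -divnMA mulnC modn_divl.
by rewrite modn_dvdm // dvdn_mull.
Qed.

Lemma iter_sub_orbit (v : nat -> T) :
  (forall x n r, r < lam -> nth x (s (v n)) r = v (n * lam + r)) ->
  forall k n j, j < lam ^ k -> iter_sub s k (v n) j = v (n * lam ^ k + j).
Proof.
move=> v_sub; elim=> [|k IHk] n j.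
  by rewrite expn0 ltnS leqn0 => /eqP ->; rewrite muln1 addn0.
move=> j_lt /=; rewrite IHk ?ltn_divLR -?expnSr // v_sub ?ltn_mod //.
by rewrite mulnDl -mulnA -expnSr -addnA -divn_eq.
Qed.

End IterSub.

Lemma ltn_mul_expD b k l i j : i < b ^ k -> j < b ^ l -> i * b ^ l + j < b ^ (k + l).
Proof.
move=> i_lt j_lt; rewrite expnD (leq_trans (_ : _ < i.+1 * b ^ l)) ?leq_mul2r ?i_lt ?orbT //.
by rewrite mulSnr ltn_add2l.
Qed.

Lemma coprime_eqn_modMr h l x y : coprime h l -> (x * l == y * l %[mod h]) = (x == y %[mod h]).
Proof.
move=> co; wlog le_yx : x y / y <= x.
  by move=> W; case: (leqP y x) => [/W//|/ltnW/W]; rewrite eq_sym [in RHS]eq_sym.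
by rewrite !eqn_mod_dvd ?leq_mul2r ?le_yx ?orbT // -mulnBl Gauss_dvdl.
Qed.

Lemma coprime_mod_affine_onto h l j t :
  coprime h l -> t < h -> exists2 s, s < h & (s * l + j) %% h = t.
Proof.
move=> co t_lt; have h_gt0 : 0 < h by apply: leq_ltn_trans t_lt.
pose f (s : 'I_h) : 'I_h := Ordinal (ltn_pmod (s * l + j) h_gt0).
have f_inj : injective f.
  move=> a b /(congr1 val) /= /eqP; rewrite eqn_modDr coprime_eqn_modMr //.
  by rewrite !modn_small // => /eqP /val_inj.
have [g _ fK] := injF_bij f_inj.
by exists (g (Ordinal t_lt)) => //; have := congr1 val (fK (Ordinal t_lt)).
Qed.

Lemma card_fibers (T I : finType) (f : T -> I) (X : {set T}) :
  #|X| = \sum_i #|[set x in X | f x == i]|.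
Proof.
rewrite -sum1_card (partition_big f xpredT) //=; apply: eq_bigr => i _.
by rewrite -sum1_card; apply: eq_bigl => x; rewrite inE.
Qed.

Section FixedPoint.
Variables (A : Type) (lam : nat) (theta : A -> lam.-tuple A) (a0 : A).
Hypotheses (lam_gt1 : 1 < lam) (theta_a0 : nth a0 (theta a0) 0 = a0).
Let lam_gt0 : 0 < lam. Proof. exact: ltnW. Qed.

Local Notation u := (fixpt theta a0).

Lemma iter_sub_a0_0 k : iter_sub theta k a0 0 = a0.
Proof. by elim: k => //= k IHk; rewrite div0n IHk mod0n. Qed.

Lemma iter_sub_a0_stable d k n :
  n < lam ^ k -> iter_sub theta (d + k) a0 n = iter_sub theta k a0 n.
Proof. by move=> n_lt; rewrite iter_subD divn_small // modn_small // iter_sub_a0_0. Qed.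

Lemma iter_sub_a0 k n : n < lam ^ k -> iter_sub theta k a0 n = u n.
Proof.
move=> n_lt; have n_lt' : n < lam ^ n.+1.
  by apply: (ltn_trans (ltn_expl n lam_gt1)); rewrite ltn_exp2l.
by rewrite /fixpt -(iter_sub_a0_stable n.+1) // addnC iter_sub_a0_stable.
Qed.

Lemma fixpt0 : u 0 = a0.
Proof. exact: iter_sub_a0_0. Qed.

Lemma fixpt_theta x n r : r < lam -> nth x (theta (u n)) r = u (n * lam + r).
Proof.
move=> r_lt; rewrite (set_nth_default (u n)) ?size_tuple //; have n_lt := ltn_expl n lam_gt1.
rewrite -[RHS](@iter_sub_a0 n.+1) /=; last first.
  by rewrite -[n.+1]addn1 -[X in _ * X + _]expn1 ltn_mul_expD ?expn1.
by rewrite divnMDl // divn_small // addn0 modnMDl modn_small // iter_sub_a0.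
Qed.

Lemma iter_sub_fixpt k n j : j < lam ^ k -> iter_sub theta k (u n) j = u (n * lam ^ k + j).
Proof. exact: (iter_sub_orbit lam_gt0 fixpt_theta). Qed.

Lemma nth_ublock h m i x : i < h -> nth x (ublock theta a0 h m) i = u (m * h + i).
Proof. by move=> i_lt; rewrite -[i]/(nat_of_ord (Ordinal i_lt)) nth_mktuple. Qed.

Lemma pure_base_ublock h x m j :
  j < lam -> nth x (pure_base theta a0 h (ublock theta a0 h m)) j =
             ublock theta a0 h (m * lam + j).
Proof.
move=> j_lt; rewrite -[j]/(nat_of_ord (Ordinal j_lt)) nth_mktuple.
apply: eq_from_tnth => t; rewrite !tnth_mktuple.
have i_lt : (j * h + t) %/ lam < h.
  rewrite ltn_divLR // (leq_trans (_ : _ < j.+1 * h)) 1?mulnC ?leq_mul2l ?j_lt ?orbT //.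
  by have := ltn_ord t; nia.
cbv zeta; rewrite nth_ublock // fixpt_theta ?ltn_mod //; congr u.
rewrite mulnDl -addnA -divn_eq; lia.
Qed.

Lemma iter_sub_pure_base h k m J :
  J < lam ^ k ->
  iter_sub (pure_base theta a0 h) k (ublock theta a0 h m) J = ublock theta a0 h (m * lam ^ k + J).
Proof. exact: (iter_sub_orbit lam_gt0 (@pure_base_ublock h)). Qed.

Lemma ublock_iter_sub_fixpt h l m n r :
  m * h = n * lam ^ l + r -> r + h <= lam ^ l ->
  ublock theta a0 h m = [tuple iter_sub theta l (u n) (r + i) | i < h].
Proof.
move=> mh_eq r_le; apply: eq_from_tnth => i; rewrite !tnth_mktuple.
rewrite iter_sub_fixpt; first by congr u; lia.
by have := ltn_ord i; lia.
Qed.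

End FixedPoint.

Definition column (T : finType) lam (s : T -> lam.-tuple T) (B : {set T}) k j : {set T} :=
  [set iter_sub s k a j | a in B].

Section Column.
Variables (T : finType) (lam : nat) (s : T -> lam.-tuple T).
Hypothesis lam_gt0 : 0 < lam.

Lemma column_iter_subD k l i j :
  j < lam ^ l -> column s [set: T] (k + l) (i * lam ^ l + j) \subset column s [set: T] l j.
Proof.
move=> j_lt; apply/subsetP => _ /imsetP [a _ ->].
rewrite iter_subD divnMDl ?expn_gt0 ?lam_gt0 // divn_small // addn0 modnMDl modn_small //.
exact: imset_f.
Qed.

Lemma min_column_iter_subD c k l i j :
  is_colnum s [set: T] c -> #|column s [set: T] l j| = c -> 0 < l -> j < lam ^ l -> i < lam ^ k ->
  column s [set: T] (k + l) (i * lam ^ l + j) = column s [set: T] l j.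
Proof.
move=> [_ c_min] col_card l_gt0 j_lt i_lt; apply/eqP.
by rewrite eqEcard column_iter_subD // col_card c_min ?addn_gt0 ?l_gt0 ?orbT ?ltn_mul_expD.
Qed.

End Column.

Section Height.
Variables (A : finType) (lam : nat) (theta : A -> lam.-tuple A) (a0 : A) (h g : nat).
Hypotheses (lam_gt1 : 1 < lam) (theta_a0 : nth a0 (theta a0) 0 = a0) (prim : primitive theta).
Hypotheses (g_gcd : is_return_gcd theta a0 g) (h_gt0 : 0 < h) (h_dvd_g : h %| g)
           (h_lam_coprime : coprime h lam).
Let lam_gt0 : 0 < lam. Proof. exact: ltnW. Qed.

Local Notation u := (fixpt theta a0).
Local Notation pure := (pure_base theta a0 h).
Local Notation ublock := (ublock theta a0 h).

Lemma fixpt_occurs b : exists n, u n == b.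
Proof.
have [k [_ k_prim]] := prim; have [j [j_lt <-]] := k_prim a0 b.
by exists j; rewrite iter_sub_a0.
Qed.

Lemma height_dvd_fixpt_a0 n : u n = a0 -> h %| n.
Proof.
case: n => [|n] un; first exact: dvdn0.
by apply: dvdn_trans h_dvd_g _; apply: g_gcd.1; split; rewrite ?un ?fixpt0.
Qed.

Lemma fixpt_eq_mod_height n n' : u n = u n' -> n = n' %[mod h].
Proof.
move=> eq_u; have [k [_ k_prim]] := prim; have [q [q_lt q_a0]] := k_prim (u n) a0.
have q_a0' := q_a0; rewrite eq_u in q_a0'.
rewrite iter_sub_fixpt // in q_a0; rewrite iter_sub_fixpt // in q_a0'.
apply/eqP; rewrite -(coprime_eqn_modMr _ _ (coprimeXr k h_lam_coprime)) -(eqn_modDr q).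
by rewrite (eqP (height_dvd_fixpt_a0 q_a0)) (eqP (height_dvd_fixpt_a0 q_a0')).
Qed.

Definition residue (x : A) : 'I_h := Ordinal (ltn_pmod (xchoose (fixpt_occurs x)) h_gt0).

Lemma residue_fixpt n t : (residue (u n) == t) = (n %% h == t).
Proof. by rewrite -val_eqE /= (fixpt_eq_mod_height (eqP (xchooseP (fixpt_occurs (u n))))). Qed.

Definition column_part k j (t : 'I_h) := [set x in column theta [set: A] k j | residue x == t].

Lemma pure_colnum_le_column_part ch k j t :
  is_colnum pure (pure_alphabet theta a0 h) ch -> j < lam ^ k -> ch <= #|column_part k j t|.
Proof.
move=> [_ ch_min] j_lt; set P := lam ^ k; set l := h * 2; set Q := lam ^ l.
have [s s_lt s_res] := coprime_mod_affine_onto j (coprimeXr k h_lam_coprime) (ltn_ord t).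
(* Blocks of the pure column at position [J] start at offset [r] in theta^l of
   the letters u((m h + s) P + j), all of which have residue [t]. *)
pose X := s * (P * Q) + j * Q; pose r := (h - X %% h) %% h.
have r_lt : r < h by rewrite ltn_mod.
have h_dvd_Xr : h %| X + r.
  rewrite /dvdn /r modnDmr -modnDml subnKC ?modnn //.
  by apply: ltnW; rewrite ltn_mod.
have Q_big : r + h <= Q.
  by apply: leq_trans (ltnW (ltn_expl l lam_gt1)); rewrite /l; lia.
pose J := (X + r) %/ h.
have Jh : J * h = X + r by rewrite divnK.
have J_lt : J < lam ^ (k + l).
  rewrite expnD -/P -/Q -(ltn_pmul2r h_gt0) Jh /X.
  have : s * (P * Q) + P * Q <= P * Q * h by rewrite -mulSnr mulnC leq_mul2l s_lt orbT.
  have : j * Q + Q <= P * Q by rewrite -mulSnr leq_mul2r j_lt orbT.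
  lia.
pose G (x : A) : h.-tuple A := [tuple iter_sub theta l x (r + i) | i < h].
have kl_gt0 : 0 < k + l by rewrite addn_gt0 muln_gt0 h_gt0 orbT.
apply: leq_trans (ch_min _ _ kl_gt0 J_lt) _.
apply: leq_trans (leq_imset_card G (column_part k j t)).
apply/subset_leq_card/subsetP => _ /imsetP [_ /[!inE] /pbP [m ->] ->].
have x_col : u ((m * h + s) * P + j) \in column theta [set: A] k j.
  by rewrite /P -iter_sub_fixpt // imset_f ?inE.
rewrite iter_sub_pure_base //; apply/imsetP; exists (u ((m * h + s) * P + j)).
  by rewrite inE x_col residue_fixpt mulnDl mulnAC -addnA modnMDl s_res eqxx.
rewrite /G; apply: (ublock_iter_sub_fixpt lam_gt1 theta_a0) => //.
by rewrite mulnDl Jh /X expnD -/P -/Q; nia.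
Qed.

Lemma column_part_le_pure_colnum c ch k j t :
  is_colnum theta [set: A] c -> #|column theta [set: A] k j| = c -> 0 < k -> j < lam ^ k ->
  is_colnum pure (pure_alphabet theta a0 h) ch -> #|column_part k j t| <= ch.
Proof.
move=> c_col col_card k_gt0 j_lt [[k0 [J0 [_ J0_lt <-]]] _].
set P := lam ^ k; set P0 := lam ^ k0; set Q := lam ^ h.
pose s := J0 * h %/ P0; pose r0 := J0 * h %% P0.
have P0_gt0 : 0 < P0 by rewrite expn_gt0 lam_gt0.
have J0h : J0 * h = s * P0 + r0 := divn_eq _ _.
have s_lt : s < h by rewrite ltn_divLR // mulnC ltn_mul2l h_gt0 J0_lt.
have r0_lt : r0 < P0 by rewrite ltn_mod.
have [t' t'_lt t'_res] := coprime_mod_affine_onto j (coprimeXr k h_lam_coprime) (ltn_ord t).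
(* Refining the column by [q] makes each of its letters of residue [t] the image of
   a block of the minimal pure column, which starts at offset r0 in theta^k0 of a
   letter of residue [s]. *)
pose q := r0 * Q + t'.
have t'_ltQ : t' < Q by apply: ltn_trans (ltn_expl h lam_gt1).
have q_lt : q < lam ^ (k0 + h) by rewrite ltn_mul_expD.
pose Phi (w : h.-tuple A) := iter_sub theta (h + k) (nth a0 w 0) (t' * P + j).
rewrite /column_part -(min_column_iter_subD lam_gt0 c_col col_card k_gt0 j_lt q_lt).
apply: leq_trans (leq_imset_card Phi _); apply/subset_leq_card/subsetP => x.
rewrite inE => /andP [/imsetP [a _ ->]].
have [n /eqP <-] := fixpt_occurs a.
rewrite iter_sub_fixpt ?ltn_mul_expD // residue_fixpt => /eqP x_res.
have n_res : n %% h = s.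
  rewrite -(modn_small s_lt); apply/eqP.
  rewrite -(coprime_eqn_modMr _ _ (coprimeXr (k0 + h) h_lam_coprime)) -(eqn_modDr q).
  rewrite -(coprime_eqn_modMr _ _ (coprimeXr k h_lam_coprime)) -(eqn_modDr j).
  have -> : (s * lam ^ (k0 + h) + q) * lam ^ k + j = J0 * Q * P * h + (t' * P + j).
    have -> : J0 * Q * P * h = J0 * h * (Q * P) by ring.
    by rewrite J0h expnD -/P -/P0 -/Q /q; ring.
  by rewrite modnMDl t'_res -x_res mulnDl -mulnA -expnD addnA.
set n' := n %/ h; have n_eq : n = n' * h + s by rewrite {1}(divn_eq n h) n_res.
apply/imsetP; exists (iter_sub pure k0 (ublock n') J0).
  by apply: imset_f; rewrite inE; apply/pbP; exists n'.
rewrite iter_sub_pure_base // /Phi nth_ublock // iter_sub_fixpt ?ltn_mul_expD //.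
have -> : (n' * P0 + J0) * h + 0 = n * P0 + r0 by rewrite addn0 mulnDl J0h n_eq; ring.
by congr u; rewrite !expnD -/P -/P0 -/Q /q; ring.
Qed.

Lemma colnum_eq_height_mul_pure_colnum c ch :
  is_colnum theta [set: A] c -> is_colnum pure (pure_alphabet theta a0 h) ch -> c = h * ch.
Proof.
move=> c_col ch_col; have [[k [j [k_gt0 j_lt col_card]]] _] := c_col.
rewrite -col_card (card_fibers residue) (eq_bigr (fun=> ch)) ?sum_nat_const ?card_ord //.
move=> t _; apply/eqP; rewrite eqn_leq.
by rewrite (column_part_le_pure_colnum t c_col) // pure_colnum_le_column_part.
Qed.

End Height.

Theorem mainTheorem6 (A : finType) (lam : nat) (theta : A -> lam.-tuple A) (a0 : A) :
  2 <= lam ->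
  primitive theta ->
  nth a0 (theta a0) 0 = a0 ->
  injective theta ->
  infinite_subshift theta a0 ->
  forall h c ch : nat,
    is_height theta a0 h ->
    is_colnum theta [set: A] c ->
    is_colnum (pure_base theta a0 h) (pure_alphabet theta a0 h) ch ->
    c = h * ch /\ h %| c.
Proof.
move=> lam_gt1 prim theta_a0 _ _ h c ch [g [g_gcd [h_gt0 h_coprime h_dvd_g _]]] c_col ch_col.
have -> := colnum_eq_height_mul_pure_colnum lam_gt1 theta_a0 prim g_gcd h_gt0 h_dvd_g h_coprime
             c_col ch_col.
by split; rewrite ?dvdn_mulr.
Qed.
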